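(* There is a unique morphism of cosimplicial objects in $\mathsf{Cat}_\Delta$ \[ \varphi=(\varphi_n)_{n\ge 0}\colon \widetilde{\mathfrak C}[\Delta^\bullet]\to \Delta^\bullet_{\overline W} \] such that for every $n\ge 0$ the simplicial functor $\varphi_n\colon \widetilde{\mathfrak C}[\Delta^n]\to\Delta^n_{\overline W}$ is the identity on objects.
   Context: $\mathsf{Cat}_\Delta$ denotes the category of small simplicially enriched categories (''simplicial categories''); for a simplicial category $\mathcal C$ and objects $x,y$, $\mathcal C(x,y)$ is the simplicial set of maps and its $n$-simplices are called $n$-arrows. The cosimplicial simplicial category $\widetilde{\mathfrak C}[\Delta^\bullet]$: $\widetilde{\mathfrak C}[\Delta^n]$ has objects $0,\dots,n$; for $i\le j$, $\widetilde{\mathfrak C}[\Delta^n](i,j)=N(P_{i,j}^{\mathrm{op}})$, where $P_{i,j}$ is the poset of subsets $I\subseteq[n]$ with $\min I=i$, $\max I=j$, ordered by inclusion (so $P_{i,j}^{\mathrm{op}}$ is ordered by reverse inclusion), and the mapping simplicial set is empty if $i>j$; composition is induced by union of subsets. A poset map $\alpha\colon[p]\to[q]$ acts by $I\mapsto\alpha(I)$. The cosimplicial simplicial category $\Delta^\bullet_{\overline W}$: $\Delta^n_{\overline W}$ is the simplicial category freely generated by an $(n-i)$-arrow $g_{n,i}\colon i-1\to i$ for each $1\le i\le n$. Explicitly, its objects are $0,\dots,n$, and $\Delta^n_{\overline W}(i,j)=\prod_{n-j\le s<n-i}\Delta^s=\Delta^{n-j}\times\cdots\times\Delta^{n-i-1}$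 if $i\le j$ (the empty product being $\Delta^0$) and $\emptyset$ if $i>j$; composition $\Delta^n_{\overline W}(j,k)\times\Delta^n_{\overline W}(i,j)\to\Delta^n_{\overline W}(i,k)$ is the identity map of $\prod_{n-k\le s<n-i}\Delta^s$; $g_{n,i}$ is the top nondegenerate simplex of $\Delta^n_{\overline W}(i-1,i)=\Delta^{n-i}$. Coface maps $\partial_i\colon\Delta^{n-1}_{\overline W}\to\Delta^n_{\overline W}$ ($n\ge1$, $0\le i\le n$) are determined on generators by $\partial_i(g_{n-1,j})=d_{i-j}g_{n,j}$ if $j<i$ or $i=n$; $=g_{n,i-1}\circ d_0 g_{n,i}$ if $j=i<n$; $=g_{n,j+1}$ if $j>i$. Codegeneracy maps $\sigma_i\colon\Delta^{n+1}_{\overline W}\to\Delta^n_{\overline W}$ ($0\le i\le n$) are given by $\sigma_i(g_{n+1,j})=s_{i-j}g_{n,j}$ if $j\le i$; $=\mathrm{id}_i$ if $j=i+1$; $=g_{n,j-1}$ if $j>i+1$. Here $d_k,s_k$ are the simplicial face and degeneracy operators on arrows. *)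

From mathcomp Require Import all_boot.
Set Implicit Arguments. Unset Strict Implicit. Unset Printing Implicit Defensive.

(* Simplices of nerves.  An m-simplex of the nerve of a poset (V, <=) is a  *)
(* monotone map [m] -> V, here a function 'I_m.+1 -> V.  Simplicial         *)
(* operators act by precomposition with monotone maps [p] -> [m].           *)

(* Objects of both simplicial categories in degree n are 0..n = 'I_n.+1.   *)

Definition Pij (n : nat) (i j : 'I_n.+1) (I : {set 'I_n.+1}) : Prop :=
  i \in I /\ j \in I /\ (forall k, k \in I -> (i <= k <= j)%N).

(* m-simplices of  C~[Delta^n](i,j) = N(P_{i,j}^op):
   I_0 >= I_1 >= ... >= I_m in P^op, i.e. I_0 \supset I_1 \supset ... *)
Definition Csimplex (n : nat) (i j : 'I_n.+1) (m : nat)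
    (x : 'I_m.+1 -> {set 'I_n.+1}) : Prop :=
  (forall k, Pij i j (x k)) /\
  (forall k l : 'I_m.+1, (k <= l)%N -> x l \subset x k).

Definition Ccomp (n m : nat) (x y : 'I_m.+1 -> {set 'I_n.+1}) :
  'I_m.+1 -> {set 'I_n.+1} := fun t => x t :|: y t.

Definition codeg (n : nat) (c : 'I_n.+1) (v : 'I_n.+2) : 'I_n.+1 :=
  inord (if (v <= c)%N then nat_of_ord v else v.-1).

(* Delta^n_{W}(i,j) = prod_{i < g <= j} Delta^{n-g}  (the factor for the
   generator g_{n,g} : g-1 -> g is Delta^{n-g}, i.e. s = n - g ranges over
   n-j <= s < n-i).  A vertex is a function t : nat -> nat, t g being the
   coordinate for the generator g; coordinates outside (i,j] are 0. *)
Definition Wvert (n i j : nat) (t : nat -> nat) : Prop :=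
  (i <= j <= n)%N /\
  (forall g, ((i < g <= j)%N -> (t g <= n - g)%N) /\
             (~~ (i < g <= j)%N -> t g = 0%N)).

(* m-simplices of the product of nerves = monotone maps to the product poset *)
Definition Wsimplex (n i j m : nat) (y : 'I_m.+1 -> nat -> nat) : Prop :=
  (forall k, Wvert n i j (y k)) /\
  (forall k l : 'I_m.+1, (k <= l)%N -> forall g, (y k g <= y l g)%N).

(* Composition Delta_W(j,k) x Delta_W(i,j) -> Delta_W(i,k): concatenation of
   coordinates (it is the identity of prod_{n-k <= s < n-i} Delta^s). *)
Definition Wcomp (m j : nat) (a b : 'I_m.+1 -> nat -> nat) :
  'I_m.+1 -> nat -> nat := fun t g => if (j < g)%N then a t g else b t g.

(* Coface partial_c : Delta^n_W -> Delta^{n+1}_W (0 <= c <= n+1) on the mapping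
   space Delta^n_W(i,j), vertexwise (the induced map of products of nerves).
   On generators: g_{n,g} |-> d_{c-g} g_{n+1,g} (g < c),
                  g_{n,c} |-> g_{n+1,c+1} o d_0 g_{n+1,c} (c <= n),
                  g_{n,g} |-> g_{n+1,g+1} (g > c).
   d_k of the top simplex of Delta^{n+1-g} is the coface [n-g] -> [n+1-g]
   skipping k; d_0 is v |-> v+1. *)
Definition Wcoface (c i j : nat) (t : nat -> nat) : nat -> nat := fun g =>
  if (g < c)%N then (if (t g < c - g)%N then t g else (t g).+1)
  else if g == c then (if (i < c <= j)%N then (t c).+1 else 0%N)
  else t g.-1.

(* Codegeneracy sigma_c : Delta^{n+1}_W -> Delta^n_W (0 <= c <= n):
   g_{n+1,g} |-> s_{c-g} g_{n,g} (g <= c), id (g = c+1), g_{n,g-1} (g > c+1).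
   s_k of the top simplex of Delta^{n-g} is the codegeneracy
   [n+1-g] -> [n-g] hitting k twice. *)
Definition Wcodeg (c : nat) (t : nat -> nat) : nat -> nat := fun g =>
  if (g <= c)%N then (if (t g <= c - g)%N then t g else (t g).-1)
  else t g.+1.

(* The data of a family (phi_n) of simplicial functors
   C~[Delta^n] -> Delta^n_W that are the identity on objects: for each n and
   objects i, j, a map of m-simplices of the mapping spaces. *)
Definition PhiData :=
  forall (n : nat) (i j : 'I_n.+1) (m : nat),
    ('I_m.+1 -> {set 'I_n.+1}) -> ('I_m.+1 -> nat -> nat).

Definition is_simplicial_map (phi : PhiData) : Prop :=
  forall n (i j : 'I_n.+1) m x, Csimplex i j x ->
    Wsimplex n i j (phi n i j m x) /\
    (forall p (alpha : 'I_p.+1 -> 'I_m.+1),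
        {homo alpha : a b / (a <= b)%N} ->
        forall t g, phi n i j p (x \o alpha) t g = phi n i j m x (alpha t) g).

Definition is_functor (phi : PhiData) : Prop :=
  (forall n (i : 'I_n.+1) g, phi n i i 0 (fun _ => [set i]) ord0 g = 0%N) /\
  (forall n (i j k : 'I_n.+1) m x y,
     Csimplex j k x -> Csimplex i j y ->
     forall t g, phi n i k m (Ccomp x y) t g = Wcomp j (phi n j k m x) (phi n i j m y) t g).

Definition is_cosimplicial (phi : PhiData) : Prop :=
  (forall n (c : 'I_n.+2) (i j : 'I_n.+1) m x, Csimplex i j x ->
     forall t g,
       phi n.+1 (lift c i) (lift c j) m (fun s => lift c @: x s) t g
       = Wcoface c i j (phi n i j m x t) g) /\
  (forall n (c : 'I_n.+1) (i j : 'I_n.+2) m x, Csimplex i j x ->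
     forall t g,
       phi n (codeg c i) (codeg c j) m (fun s => codeg c @: x s) t g
       = Wcodeg c (phi n.+1 i j m x t) g).

Definition is_cosimplicial_morphism (phi : PhiData) : Prop :=
  [/\ is_simplicial_map phi, is_functor phi & is_cosimplicial phi].

From mathcomp Require Import all_boot zify.
Set Implicit Arguments. Unset Strict Implicit. Unset Printing Implicit Defensive.

(* An identity-on-objects simplicial functor is determined by the images of the
   vertices I of the mapping spaces, and these are forced by induction on n: a
   vertex of C~[Delta^(n+1)] missing some c is the image under the coface d_c of
   a vertex in degree n, and the only other vertex, I = [0, n+1], is the
   composite of {n, n+1}, which lands in Delta^(n+1)_W(n, n+1) = Delta^0, with
   [0, n], which misses n+1.  For existence, send I to the point whose
   coordinate at the generator g is the distance from g to the least element of
   I that is >= g: this is antitone in I, turns unions into concatenation of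
   coordinates, and transforms under d_c and s_c exactly as the coface and
   codegeneracy formulas of Delta^._W prescribe. *)

Section FirstAbove.
Variable n : nat.
Implicit Types (X Y : {set 'I_n.+1}) (b v : 'I_n.+1) (g : nat).

Definition first_above X g b :=
  [/\ b \in X, g <= b & forall v, v \in X -> g <= v -> b <= v].

Lemma exists_first_above X g v : v \in X -> g <= v -> exists b, first_above X g b.
Proof.
move=> vX gv; have Pv : (v \in X) && (g <= v) by rewrite vX.
case: (@arg_minnP _ v (fun w => (w \in X) && (g <= w)) val Pv) => b /andP[bX gb] min_b.
by exists b; split=> // w wX gw; apply: min_b; rewrite wX.
Qed.

Lemma first_above_setU X Y g b :
  first_above X g b -> (forall v, v \in Y -> g <= v -> b <= v) ->
  first_above (X :|: Y) g b.
Proof.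
case=> bX gb min_b minY; split; rewrite ?inE ?bX //.
by move=> v; rewrite inE => /orP[]; [exact: min_b | exact: minY].
Qed.

(* Equal to [n.+1] if no element of X is >= g; this case never arises below. *)
Definition gap X g : nat := find (fun k => k \in [seq val v | v in X]) (iota g n.+1).

Lemma gapE X g b : first_above X g b -> gap X g = b - g.
Proof.
case=> bX gb min_b; have lt_bg : b - g < n.+1 by have := ltn_ord b; lia.
have Xb : val b \in [seq val v | v in X] by exact: image_f.
apply/eqP; rewrite eqn_leq; apply/andP; split.
- rewrite leqNgt; apply/negP => /(before_find 0).
  by rewrite nth_iota // subnKC // Xb.
- rewrite /gap leq_subLR.
  have has_X : has (fun k => k \in [seq val v | v in X]) (iota g n.+1).
    by apply/hasP; exists (val b); rewrite // mem_iota gb /=; lia.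
  have := nth_find 0 has_X; rewrite has_find size_iota in has_X.
  rewrite nth_iota // => /imageP[v vX Ev].
  by rewrite Ev; apply: min_b; rewrite // -Ev leq_addr.
Qed.

End FirstAbove.

Lemma first_above_imset n1 n2 (f : 'I_n1.+1 -> 'I_n2.+1) X g g' b :
  {homo f : v w / v <= w} -> (forall v, (g <= f v) = (g' <= v)) ->
  first_above X g' b -> first_above (f @: X) g (f b).
Proof.
move=> f_mono f_refl [bX gb min_b]; split; rewrite ?imset_f ?f_refl //.
by move=> _ /imsetP[v vX ->]; rewrite f_refl => gv; apply/f_mono/min_b.
Qed.

Definition canon_vertex n (i j : 'I_n.+1) (X : {set 'I_n.+1}) : nat -> nat :=
  fun g => if i < g <= j then gap X g else 0.

Definition phi_can : PhiData := fun n i j m x t => canon_vertex i j (x t).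

Lemma phi_can_simplicial : is_simplicial_map phi_can.
Proof.
move=> n i j m x [Px sub_x]; split=> //; split.
- move=> k; have [iX [jX bnd]] := Px k.
  split; first by have := bnd _ iX; have := ltn_ord j; lia.
  move=> g; rewrite /phi_can /canon_vertex.
  split=> [R | /negbTE-> //]; rewrite R; case/andP: R => _ gj.
  have [b Hb] := exists_first_above jX gj.
  by rewrite (gapE Hb); have := ltn_ord b; lia.
- move=> k l le_kl g; rewrite /phi_can /canon_vertex.
  case: ifP => // /andP[_ gj]; have [_ [jXk _]] := Px k; have [_ [jXl _]] := Px l.
  have [b Hb] := exists_first_above jXk gj.
  have [b' Hb'] := exists_first_above jXl gj.
  rewrite (gapE Hb) (gapE Hb') leq_sub2r //.
  case: Hb Hb' => _ _ min_b [b'X gb' _].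
  by apply: min_b; rewrite // (subsetP (sub_x _ _ le_kl)).
Qed.

Lemma canon_vertex_setU n (i j k : 'I_n.+1) X Y : Pij j k X -> Pij i j Y ->
  forall g, canon_vertex i k (X :|: Y) g =
            if j < g then canon_vertex j k X g else canon_vertex i j Y g.
Proof.
move=> [jX [kX bndX]] [iY [jY bndY]] g; rewrite /canon_vertex.
have := bndX _ jX; have := bndY _ iY => le_ij le_jk.
case: (ltnP j g) => [jg | gj].
- have -> : (i < g <= k) = (j < g <= k) by lia.
  rewrite jg; case: ifP => // /andP[_ gk]; have [b Hb] := exists_first_above kX gk.
  rewrite (gapE Hb) (gapE (first_above_setU Hb _)) // => v /bndY; lia.
- have -> : (i < g <= k) = (i < g <= j) by lia.
  rewrite ltnNge gj /=; case: ifP => // _; have [b Hb] := exists_first_above jY gj.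
  have [_ _ min_b] := Hb; have := min_b _ jY gj => bj.
  by rewrite setUC (gapE Hb) (gapE (first_above_setU Hb _)) // => v /bndX; lia.
Qed.

Lemma phi_can_functor : is_functor phi_can.
Proof.
split=> [n i g | n i j k m x y [Px _] [Py _] t].
  by rewrite /phi_can /canon_vertex; case: ifP => //; lia.
exact: canon_vertex_setU (Px t) (Py t).
Qed.

Lemma Wcoface_inside c i j t g b :
  i < unbump c g <= j -> unbump c g <= b -> t (unbump c g) = b - unbump c g ->
  Wcoface c i j t g = bump c b - g.
Proof.
rewrite /Wcoface /bump /unbump; case: (ltngtP g c) => gc /=.
- by rewrite subn0 => _ gb ->; rewrite ltn_sub2rE //; case: ltnP; lia.
- by rewrite subn1 => _ gb ->; lia.
- by rewrite gc ?eqxx subn0 => -> cb ->; lia.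
Qed.

Lemma Wcoface_outside c i j t g :
  ~~ (i < unbump c g <= j) -> t (unbump c g) = 0 -> Wcoface c i j t g = 0.
Proof.
rewrite /Wcoface /unbump; case: (ltngtP g c) => gc /=.
- by rewrite subn0 => _ ->; rewrite subn_gt0 gc.
- by rewrite subn1 => _ ->.
- by rewrite -gc subn0 => /negbTE->.
Qed.

Lemma Wcodeg_inside c t g b :
  bump c.+1 g <= b -> t (bump c.+1 g) = b - bump c.+1 g ->
  Wcodeg c t g = unbump c b - g.
Proof.
rewrite /Wcodeg /bump /unbump; case: (leqP g c) => gc /=.
- by move=> gb ->; case: (ltnP c b) => cb; case: ifP; lia.
- by move=> gb ->; case: (ltnP c b) => cb; lia.
Qed.

Lemma Wcodeg_outside c t g : t (bump c.+1 g) = 0 -> Wcodeg c t g = 0.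
Proof. by rewrite /Wcodeg /bump; case: (leqP g c) => gc /= ->. Qed.

Lemma codeg_unbump n (c : 'I_n.+1) (v : 'I_n.+2) : codeg c v = unbump c v :> nat.
Proof.
rewrite /codeg /unbump inordK; first by case: (leqP v c); lia.
by have := ltn_ord v; have := ltn_ord c; case: (leqP v c); lia.
Qed.

Lemma leq_unbump c g v : (g <= unbump c v) = (bump c.+1 g <= v).
Proof. by rewrite /unbump /bump; case: (ltnP c v); case: (leqP c.+1 g); lia. Qed.

Lemma canon_vertex_lift n (c : 'I_n.+2) (i j : 'I_n.+1) X : Pij i j X ->
  canon_vertex (lift c i) (lift c j) (lift c @: X) =1 Wcoface c i j (canon_vertex i j X).
Proof.
move=> [_ [jX _]] g; rewrite {1}/canon_vertex.
have -> : (lift c i < g <= lift c j) = (i < unbump c g <= j).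
  by rewrite /= ltnNge leq_bump -ltnNge leq_bump.
case: ifP => R; last by rewrite Wcoface_outside ?R // /canon_vertex R.
case/andP: (R) => _ uj; have [b Hb] := exists_first_above jX uj.
have lift_mono : {homo lift c : v w / v <= w} by move=> v w; rewrite /= leq_bump2.
rewrite (gapE (first_above_imset lift_mono _ Hb)) => [|v]; last by rewrite /= leq_bump.
have [_ ub _] := Hb.
by rewrite (Wcoface_inside R ub) // /canon_vertex R (gapE Hb).
Qed.

Lemma canon_vertex_codeg n (c : 'I_n.+1) (i j : 'I_n.+2) X : Pij i j X ->
  canon_vertex (codeg c i) (codeg c j) (codeg c @: X) =1 Wcodeg c (canon_vertex i j X).
Proof.
move=> [_ [jX _]] g; rewrite {1}/canon_vertex !codeg_unbump.
have -> : (unbump c i < g <= unbump c j) = (i < bump c.+1 g <= j).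
  by rewrite ltnNge leq_unbump -ltnNge leq_unbump.
case: ifP => R; last by rewrite Wcodeg_outside // /canon_vertex R.
case/andP: (R) => _ uj; have [b Hb] := exists_first_above jX uj.
have codeg_mono : {homo codeg c : v w / v <= w}.
  by move=> v w; rewrite !codeg_unbump /unbump; case: (ltnP c v); case: (ltnP c w); lia.
rewrite (gapE (first_above_imset codeg_mono _ Hb)) => [|v];
  last by rewrite codeg_unbump leq_unbump.
have [_ ub _] := Hb.
by rewrite (Wcodeg_inside ub) ?codeg_unbump // /canon_vertex R (gapE Hb).
Qed.

Lemma phi_can_morphism : is_cosimplicial_morphism phi_can.
Proof.
split; [exact: phi_can_simplicial | exact: phi_can_functor | split].
- by move=> n c i j m x [Px _] t; exact: canon_vertex_lift (Px t).
- by move=> n c i j m x [Px _] t; exact: canon_vertex_codeg (Px t).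
Qed.

Definition phi_vertex (phi : PhiData) n (i j : 'I_n.+1) (I : {set 'I_n.+1}) : nat -> nat :=
  phi n i j 0 (fun _ => I) ord0.

Lemma Csimplex_vertex n (i j : 'I_n.+1) I : Pij i j I -> Csimplex i j (fun _ : 'I_1 => I).
Proof. by split=> // k l _; exact: subxx. Qed.

Lemma simplicial_map_vertexwise (phi : PhiData) : is_simplicial_map phi ->
  forall n (i j : 'I_n.+1) m x, Csimplex i j x ->
  forall t, phi n i j m x t =1 phi_vertex phi i j (x t).
Proof.
move=> phi_simpl n i j m x Cx t g.
have [_ nat_phi] := phi_simpl n i j m x Cx.
by rewrite -(nat_phi 0 (fun _ => t) (fun _ _ _ => leqnn _) ord0).
Qed.

Lemma Wvert_phi_vertex (phi : PhiData) : is_simplicial_map phi ->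
  forall n (i j : 'I_n.+1) I, Pij i j I -> Wvert n i j (phi_vertex phi i j I).
Proof. by move=> phi_simpl n i j I /Csimplex_vertex/phi_simpl[[Wv _] _]; apply: Wv. Qed.

Lemma Wvert_zero n i j t g : Wvert n i j t -> ~~ (i < g <= j) || (n <= g) -> t g = 0.
Proof.
move=> [_ /(_ g)[bnd_t out_t]].
case: (boolP (i < g <= j)) => [R ng | R _]; last exact: out_t.
by have := bnd_t R; rewrite /= in ng; lia.
Qed.

Lemma functor_vertex_setU (phi : PhiData) : is_functor phi ->
  forall n (i j k : 'I_n.+1) X Y, Pij j k X -> Pij i j Y ->
  forall g, phi_vertex phi i k (X :|: Y) g =
            if j < g then phi_vertex phi j k X g else phi_vertex phi i j Y g.
Proof.
move=> [_ comp_phi] n i j k X Y PX PY g.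
exact: comp_phi _ _ _ _ _ _ _ (Csimplex_vertex PX) (Csimplex_vertex PY) ord0 g.
Qed.

Lemma cosimplicial_vertex_lift (phi : PhiData) : is_cosimplicial phi ->
  forall n (c : 'I_n.+2) (i j : 'I_n.+1) I, Pij i j I ->
  phi_vertex phi (lift c i) (lift c j) (lift c @: I) =1
  Wcoface c i j (phi_vertex phi i j I).
Proof.
move=> [coface_phi _] n c i j I PI.
exact: coface_phi _ _ _ _ _ _ (Csimplex_vertex PI) ord0.
Qed.

Lemma Pij_lift_preimage n (c : 'I_n.+2) (i j : 'I_n.+2) (I : {set 'I_n.+2}) :
  c \notin I -> Pij i j I ->
  exists i' j' (I' : {set 'I_n.+1}),
    [/\ i = lift c i', j = lift c j', I = lift c @: I' & Pij i' j' I'].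
Proof.
move=> cI [iI [jI bnd]].
have lift_of v : v \in I -> {v' | v = lift c v'}.
  by case: (unliftP c v) => [v' ->|->]; [exists v' | rewrite (negbTE cI)].
have [i' Ei] := lift_of i iI; have [j' Ej] := lift_of j jI.
exists i', j', [set v | lift c v \in I]; split=> //.
  apply/setP=> v; apply/idP/imsetP=> [vI | [v' + ->]]; last by rewrite inE.
  by have [v' Ev] := lift_of v vI; exists v'; rewrite // inE -Ev.
split; [by rewrite inE -Ei | split; first by rewrite inE -Ej].
by move=> k; rewrite inE => /bnd; rewrite Ei Ej /= !leq_bump2.
Qed.

Section Uniqueness.
Variables phi psi : PhiData.
Hypotheses (phi_morph : is_cosimplicial_morphism phi)
           (psi_morph : is_cosimplicial_morphism psi).

Definition agree_in_degree n := forall (i j : 'I_n.+1) (I : {set 'I_n.+1}),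
  Pij i j I -> phi_vertex phi i j I =1 phi_vertex psi i j I.

Lemma agree_missing_point n : agree_in_degree n ->
  forall (i j c : 'I_n.+2) (I : {set 'I_n.+2}), c \notin I -> Pij i j I ->
  phi_vertex phi i j I =1 phi_vertex psi i j I.
Proof.
move=> agree_n i j c I cI /(Pij_lift_preimage cI)[i' [j' [I' [-> -> -> PI']]]] g.
have [_ _ cosimpl_phi] := phi_morph; have [_ _ cosimpl_psi] := psi_morph.
rewrite !cosimplicial_vertex_lift // /Wcoface.
by rewrite !(agree_n _ _ _ PI').
Qed.

Lemma agree_full n : agree_in_degree n ->
  forall (i j : 'I_n.+2) (I : {set 'I_n.+2}), (forall v, v \in I) -> Pij i j I ->
  phi_vertex phi i j I =1 phi_vertex psi i j I.
Proof.
move=> agree_n i j I inI [_ [_ bnd]].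
have i0 : i = 0 :> nat by have := bnd ord0 (inI _) => /=; lia.
have jn : j = n.+1 :> nat by have := bnd ord_max (inI _) => /=; have := ltn_ord j; lia.
pose jj : 'I_n.+2 := inord n; have jjn : jj = n :> nat by rewrite inordK.
pose A := [set jj; j]; pose B := [set v : 'I_n.+2 | v <= n].
have -> : I = A :|: B.
  apply/setP=> v; rewrite !inE inI; case: (leqP v n) => vn; rewrite ?orbT //.
  by rewrite (_ : v = j) ?eqxx ?orbT //; apply: ord_inj; have := ltn_ord v; lia.
have PA : Pij jj j A.
  by split; rewrite !inE ?eqxx ?orbT //; split=> // k; rewrite !inE => /orP[] /eqP->; lia.
have PB : Pij i jj B by split; [|split=> [|k]]; rewrite inE; lia.
have [phi_simpl phi_functor _] := phi_morph; have [psi_simpl psi_functor _] := psi_morph.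
move=> g; rewrite (functor_vertex_setU phi_functor PA PB).
rewrite (functor_vertex_setU psi_functor PA PB); case: ifP => jjg.
  have ng : n.+1 <= g by lia.
  by rewrite !(Wvert_zero (Wvert_phi_vertex _ PA)) ?ng ?orbT.
have maxB : ord_max \notin B by rewrite inE ltnn.
exact (agree_missing_point agree_n maxB PB g).
Qed.

Lemma agree_all n : agree_in_degree n.
Proof.
have [phi_simpl _ _] := phi_morph; have [psi_simpl _ _] := psi_morph.
elim: n => [|n agree_n] i j I PI g.
  by rewrite !(Wvert_zero (Wvert_phi_vertex _ PI)) ?orbT.
have [c cI | full_I] := pickP [pred c | c \notin I].
  exact (agree_missing_point agree_n cI PI g).
by apply: (agree_full agree_n _ PI) => v; have := full_I v => /= /negbFE.
Qed.

End Uniqueness.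

Theorem proposition3p3 :
  (exists phi : PhiData, is_cosimplicial_morphism phi) /\
  (forall phi psi : PhiData,
     is_cosimplicial_morphism phi -> is_cosimplicial_morphism psi ->
     forall n (i j : 'I_n.+1) m (x : 'I_m.+1 -> {set 'I_n.+1}),
       Csimplex i j x ->
       forall t g, phi n i j m x t g = psi n i j m x t g).
Proof.
split; first by exists phi_can; exact: phi_can_morphism.
move=> phi psi phi_morph psi_morph n i j m x Cx t g.
have [phi_simpl _ _] := phi_morph; have [psi_simpl _ _] := psi_morph.
rewrite (simplicial_map_vertexwise phi_simpl Cx) (simplicial_map_vertexwise psi_simpl Cx).
exact: (agree_all phi_morph psi_morph (proj1 Cx t)).
Qed.
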